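(* Let $\theta\in(0,1)$ and $\delta>0$ with $\theta+\delta<1$, and for $\lambda>0$ set $\varphi_0(x)=e^{\lambda(x-\theta)^2}$. For a sufficiently large fixed constant $\lambda>0$, there exist constants $s_0>0$ and $C>0$ such that $$s\int_{\theta+\delta}^1|f(x)|^2e^{2s\varphi_0(x)}\,dx\le C\int_{\theta+\delta}^1|f'(x)|^2e^{2s\varphi_0(x)}\,dx$$ for all $s\ge s_0$ and all $f\in H^1(\theta+\delta,1)$ with $f(1)=0$. *)

From mathcomp Require Import all_boot all_order all_algebra.
From mathcomp Require Import all_classical all_reals all_analysis.
Set Implicit Arguments. Unset Strict Implicit. Unset Printing Implicit Defensive.
Import Order.TTheory GRing.Theory Num.Theory.
Local Open Scope classical_set_scope.
Local Open Scope ring_scope.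

(* [H1_deriv a b f g] : f (restricted to [a,b]) belongs to H^1(a,b), f being
   its (absolutely) continuous representative, and g is its weak derivative:
   g is measurable, g and g^2 are Lebesgue integrable on [a,b], and
   f x = f a + \int_a^x g for every x in [a,b]. *)
Definition H1_deriv (R : realType) (a b : R) (f g : R -> R) : Prop :=
  [/\ measurable_fun `[a, b] g,
      (@lebesgue_measure R).-integrable `[a, b] (fun x => (g x)%:E),
      (@lebesgue_measure R).-integrable `[a, b] (fun x => (g x ^+ 2)%:E) &
      forall x, a <= x <= b ->
        f x = f a + Rintegral (@lebesgue_measure R) `[a, x] g].

Definition phi0 (R : realType) (lambda theta : R) (x : R) : R :=
  expR (lambda * (x - theta) ^+ 2).

(* Write psi := 2 s phi0.  On [theta + delta, 1] the weight grows at least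
   linearly: since expR u - expR v >= u - v for 0 <= v <= u, we get
   psi y - psi x >= k (y - x) with k = 4 s lambda delta.  As f 1 = 0,
   f x = - \int_x^1 g, and Cauchy-Schwarz with the weights e^psi, e^-psi gives
     f(x)^2 <= (\int_x^1 g^2 e^psi) (\int_x^1 e^-psi)
            <= (\int g^2 e^psi) e^(- psi x) / k.
   Multiplying by e^(psi x) and integrating over [theta + delta, 1] yields
   k \int f^2 e^psi <= (1 - theta - delta) \int g^2 e^psi, which is the
   estimate with C = (1 - theta - delta) / (4 lambda delta), valid for every
   lambda > 0 and s > 0. *)

From mathcomp Require Import all_boot all_order all_algebra.
From mathcomp Require Import all_classical all_reals all_analysis.
From mathcomp Require Import ring lra measurable_realfun.
Import numFieldTopology.Exports.
Import Order.TTheory GRing.Theory Num.Theory.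
Local Open Scope classical_set_scope.
Local Open Scope ring_scope.

Section real_inequalities.
Context {R : realType}.

Lemma sub_le_expR_sub (u v : R) : 0 <= v -> v <= u ->
  u - v <= expR u - expR v.
Proof.
move=> v0 vu.
have -> : expR u = expR v * expR (u - v) by rewrite -expRD addrCA subrr addr0.
have ev : 1 <= expR v by rewrite -expR0 ler_expR.
have := expR_ge1Dx (u - v).
nra.
Qed.

Lemma normr_le_amgm (e t y : R) : 0 < e -> 0 < t ->
  `|y| <= e / 2 * (y ^+ 2 * t) + (2 * e)^-1 * t^-1.
Proof.
move=> e0 t0; rewrite -real_normK ?num_real //.
have et0 : 0 < e * t by exact: mulr_gt0.
have -> : e / 2 * (`|y| ^+ 2 * t) + (2 * e)^-1 * t^-1 =
    `|y| + (e * t * `|y| - 1) ^+ 2 / (2 * (e * t)).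
  by field; rewrite !gt_eqF.
by rewrite lerDl divr_ge0 ?sqr_ge0 // ltW // mulr_gt0.
Qed.

Lemma sqr_le_of_forall_amgm (u J M : R) : 0 <= u -> 0 <= J -> 0 < M ->
  (forall e, 0 < e -> u <= e / 2 * J + (2 * e)^-1 * M) -> u ^+ 2 <= J * M.
Proof.
move=> u0 J0 M0 amgm.
have [->|u_neq0] := eqVneq u 0; first by rewrite expr0n mulr_ge0 // ltW.
have u_gt0 : 0 < u by rewrite lt_neqAle eq_sym u_neq0.
have := amgm (M / u) (divr_gt0 M0 u_gt0).
have -> : M / u / 2 * J + (2 * (M / u))^-1 * M = (M * J / u + u) / 2.
  by field; rewrite !gt_eqF.
move=> le_u.
have : u * u <= M * J / u * u by apply: ler_wpM2r; lra.
by rewrite divfK ?gt_eqF // expr2 (mulrC J).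
Qed.

End real_inequalities.

Section phi0.
Context {R : realType}.

Lemma phi0_increment (lambda theta delta x y : R) :
  0 < lambda -> 0 <= delta -> theta + delta <= x -> x <= y ->
  2 * lambda * delta * (y - x) <= phi0 lambda theta y - phi0 lambda theta x.
Proof.
move=> l0 d0 ax xy; rewrite /phi0.
have sqr_incr : 2 * lambda * delta * (y - x) <=
    lambda * (y - theta) ^+ 2 - lambda * (x - theta) ^+ 2.
  have -> : lambda * (y - theta) ^+ 2 - lambda * (x - theta) ^+ 2 =
    lambda * (y - x) * (y + x - 2 * theta) by ring.
  have -> : 2 * lambda * delta * (y - x) = lambda * (y - x) * (2 * delta) by ring.
  by apply: ler_wpM2l; [apply: mulr_ge0; lra | lra].
apply: (le_trans sqr_incr); apply: sub_le_expR_sub.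
- by rewrite mulr_ge0 ?sqr_ge0 // ltW.
- by rewrite -subr_ge0 (le_trans _ sqr_incr) // !mulr_ge0 ?subr_ge0 // ltW.
Qed.

Lemma measurable_phi0 (lambda theta : R) :
  measurable_fun [set: R] (phi0 lambda theta).
Proof.
apply: measurableT_comp => //; apply: measurable_funM => //.
by apply: measurable_funX; exact: measurable_funB.
Qed.

End phi0.

Section expR_integral.
Context {R : realType}.
Notation mu := (@lebesgue_measure R).

Lemma continuous_expR_mulN (k : R) : continuous (fun y : R^o => expR (- k * y)).
Proof.
move=> y; apply: continuous_comp; last exact: continuous_expR.
by apply: continuousM => //; apply: (@continuousN _ R^o); exact: cst_continuous.
Qed.

Lemma derive1_expR_mulN (k y : R) :
  (fun z => - expR (- k * z))^`()%classic y = k * expR (- k * y).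
Proof.
rewrite derive1_comp// derive1N// derive1_id mulN1r derive1_comp// derive1E.
have /funeqP -> := @derive_expR R.
by rewrite derive1Ml// derive1_id mulr1 mulrN opprK mulrC.
Qed.

Lemma integral_expR_mulN (k x b : R) : x < b ->
  (\int[mu]_(y in `[x, b]) (k * expR (- k * y))%:E =
    (expR (- k * x) - expR (- k * b))%:E)%E.
Proof.
move=> xb; rewrite addrC EFinD EFinN -[X in (_ + X)%E]oppeK -EFinN.
apply: (@continuous_FTC2 _ _ (fun z => - expR (- k * z))) => //.
- apply: continuous_subspaceT => y.
  by apply: cvgM; [exact: cvg_cst | exact: continuous_expR_mulN].
- split.
  + by move=> z _; exact: ex_derive.
  + by apply/cvg_at_right_filter; apply: cvgN; exact: continuous_expR_mulN.
  + by apply/cvg_at_left_filter; apply: cvgN; exact: continuous_expR_mulN.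
- by move=> z _; exact: derive1_expR_mulN.
Qed.

End expR_integral.

Section weighted_integral.
Context {d : measure_display} {T : measurableType d} {R : realType}
  {mu : {measure set T -> \bar R}}.

(* Needed because the H^1 function f is only known through its integral
   representation, so f ^+ 2 * expR psi is not known to be measurable. *)
Lemma ge0_le_integral_nonmeasurable (D : set T) (f1 f2 : T -> \bar R) :
  (forall x, D x -> 0 <= f1 x)%E -> (forall x, D x -> f1 x <= f2 x)%E ->
  (\int[mu]_(x in D) f1 x <= \int[mu]_(x in D) f2 x)%E.
Proof.
move=> f10 f12.
have f20 x : D x -> (0 <= f2 x)%E by move=> Dx; exact: le_trans (f10 x Dx) (f12 x Dx).
rewrite !ge0_integralE //; apply: ereal_sup_le => _ [h hf <-]; exists h => // x.
by apply: le_trans (hf x) _; rewrite /patch; case: ifP => // /set_mem; exact: f12.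
Qed.

Context {D : set T} {h psi : T -> R}.
Hypotheses (mD : measurable D) (mh : measurable_fun D h) (mpsi : measurable_fun D psi).

Lemma integral_abs_le_amgm (e : R) : 0 < e ->
  (\int[mu]_(x in D) `|(h x)%:E| <=
    (e / 2)%:E * \int[mu]_(x in D) (h x ^+ 2 * expR (psi x))%:E +
    ((2 * e)^-1)%:E * \int[mu]_(x in D) (expR (- psi x))%:E)%E.
Proof.
move=> e0.
have mh2w : measurable_fun D (fun x => (h x ^+ 2 * expR (psi x))%:E).
  apply/measurable_EFinP; apply: measurable_funM; first exact: measurable_funX.
  exact: measurableT_comp.
have mwN : measurable_fun D (fun x => (expR (- psi x))%:E).
  by apply/measurable_EFinP; apply: measurableT_comp => //; exact: measurable_funN.
have h2w0 x : D x -> (0 <= (h x ^+ 2 * expR (psi x))%:E)%E.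
  by move=> _; rewrite lee_fin mulr_ge0 ?sqr_ge0 ?expR_ge0.
have wN0 x : D x -> (0 <= (expR (- psi x))%:E)%E by move=> _; rewrite lee_fin expR_ge0.
rewrite -ge0_integralZl_EFin ?divr_ge0 ?(ltW e0) //.
rewrite -ge0_integralZl_EFin ?invr_ge0 ?mulr_ge0 ?(ltW e0) //.
rewrite -ge0_integralD //; last 4 first.
- by move=> x Dx; rewrite mule_ge0 ?h2w0 // lee_fin divr_ge0 ?(ltW e0).
- exact: measurable_funeM.
- by move=> x Dx; rewrite mule_ge0 ?wN0 // lee_fin invr_ge0 mulr_ge0 ?(ltW e0).
- exact: measurable_funeM.
apply: ge0_le_integral => //.
- by apply: measurableT_comp => //; exact/measurable_EFinP.
- by apply: emeasurable_funD; exact: measurable_funeM.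
move=> x _; rewrite -!EFinM -EFinD abse_EFin lee_fin expRN.
exact: normr_le_amgm (expR_gt0 _).
Qed.

(* Obtained by optimising e in integral_abs_le_amgm, which avoids L^p norms. *)
Lemma cauchy_schwarz_expR_weight {u I M : R} : 0 <= u -> 0 < M ->
  (u%:E <= \int[mu]_(x in D) `|(h x)%:E|)%E ->
  (\int[mu]_(x in D) (h x ^+ 2 * expR (psi x))%:E <= I%:E)%E ->
  (\int[mu]_(x in D) (expR (- psi x))%:E <= M%:E)%E ->
  u ^+ 2 <= I * M.
Proof.
move=> u0 M0 uh hI wM.
have I0 : 0 <= I.
  rewrite -lee_fin; apply: le_trans hI; apply: integral_ge0 => x _.
  by rewrite lee_fin mulr_ge0 ?sqr_ge0 ?expR_ge0.
apply: sqr_le_of_forall_amgm => // e e0; rewrite -lee_fin.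
apply: (le_trans uh); apply: (le_trans (integral_abs_le_amgm _ e0)).
by rewrite EFinD !EFinM leeD // lee_wpmul2l // lee_fin ?divr_ge0 ?invr_ge0 ?mulr_ge0 ?(ltW e0).
Qed.

End weighted_integral.

Section linear_growth.
Context {R : realType}.
Notation mu := (@lebesgue_measure R).

Lemma integral_expRN_le_of_growth {psi : R -> R} {k x b : R} : 0 < k -> x < b ->
  measurable_fun `[x, b] psi ->
  (forall y, x <= y <= b -> psi x + k * (y - x) <= psi y) ->
  (\int[mu]_(y in `[x, b]) (expR (- psi y))%:E <= (expR (- psi x) / k)%:E)%E.
Proof.
move=> k0 xb mpsi psi_growth.
set c := expR (- psi x + k * x) / k.
have c0 : 0 <= c by rewrite divr_ge0 ?expR_ge0 ?ltW.
have mexpk : measurable_fun `[x, b] (fun y => (k * expR (- k * y))%:E).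
  apply/measurable_EFinP; apply: measurable_funM => //.
  by apply: measurableT_comp => //; exact: measurable_funM.
apply: (@le_trans _ _ (\int[mu]_(y in `[x, b]) (c%:E * (k * expR (- k * y))%:E))%E).
  apply: ge0_le_integral => //.
  - apply/measurable_EFinP; apply: measurableT_comp => //.
    exact: measurable_funN.
  - exact: measurable_funeM.
  move=> y; rewrite /= in_itv /= => xyb; rewrite -EFinM lee_fin.
  have -> : c * (k * expR (- k * y)) = expR (- psi x + k * (x - y)).
    by rewrite /c mulrA divfK ?gt_eqF // -expRD; congr expR; ring.
  by rewrite ler_expR; have := psi_growth y xyb; lra.
rewrite ge0_integralZl_EFin //; last by move=> y _; rewrite lee_fin mulr_ge0 ?expR_ge0 ?ltW.
rewrite integral_expR_mulN // -EFinM lee_fin.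
have -> : expR (- psi x) / k = c * expR (- k * x).
  by rewrite /c mulrAC -expRD; congr (expR _ / _); ring.
by rewrite ler_wpM2l // gerBl expR_ge0.
Qed.

Lemma H1_deriv_abs_sub_le {a b x : R} {f g : R -> R} :
  H1_deriv a b f g -> a <= x <= b ->
  (`|f b - f x|%:E <= \int[mu]_(y in `]x, b]) `|(g y)%:E|)%E.
Proof.
move=> [_ ig _ fE] /andP[ax xb].
have ab : a <= b by exact: le_trans ax xb.
have igx : mu.-integrable `]x, b] (EFin \o g).
  by apply: integrableS ig => //; apply: subset_itv; rewrite bnd_simp.
have -> : f b - f x = Rintegral mu `]x, b] g.
  rewrite (fE b) ?ab ?lexx // (fE x) ?ax ?xb // opprD addrACA subrr add0r.
  by apply: Rintegral_itvB; rewrite ?bnd_simp.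
rewrite -abse_EFin fineK; last exact: integrable_fin_num igx.
by apply: le_abse_integral => //; exact: measurable_int igx.
Qed.

Section carleman_linear_weight.
Context {a b k : R} {psi f g : R -> R}.
Hypotheses (ab : a < b) (k_gt0 : 0 < k) (mpsi : measurable_fun `[a, b] psi)
  (psi_growth : forall x y, a <= x -> x <= y <= b -> psi x + k * (y - x) <= psi y)
  (fg : H1_deriv a b f g) (fb0 : f b = 0).

Let J := (\int[mu]_(y in `[a, b]) (g y ^+ 2 * expR (psi y))%:E)%E.

Let J_ge0 : (0 <= J)%E.
Proof. by apply: integral_ge0 => y _; rewrite lee_fin mulr_ge0 ?sqr_ge0 ?expR_ge0. Qed.

Lemma carleman_pointwise x I : a <= x <= b -> (J <= I%:E)%E ->
  f x ^+ 2 * expR (psi x) <= I / k.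
Proof.
move=> axb JI; case/andP: (axb) => ax xb.
have I0 : 0 <= I by rewrite -lee_fin (le_trans J_ge0).
have [->|xb'] := eqVneq x b; first by rewrite fb0 expr0n /= mul0r divr_ge0 // ltW.
have x_lt_b : x < b by rewrite lt_neqAle xb' xb.
have sub_xb : `[x, b] `<=` `[a, b] by apply: subset_itv; rewrite bnd_simp.
have sub_oc : `]x, b] `<=` `[x, b] by apply: subset_itvr; rewrite bnd_simp.
have [mg _ _ _] := fg.
have mpsi_xb : measurable_fun `[x, b] psi := measurable_funS (measurable_itv _) sub_xb mpsi.
have mpsi_oc : measurable_fun `]x, b] psi := measurable_funS (measurable_itv _) sub_oc mpsi_xb.
have mg_oc : measurable_fun `]x, b] g :=
  measurable_funS (measurable_itv _) (subset_trans sub_oc sub_xb) mg.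
have f_le : (`|f x|%:E <= \int[mu]_(y in `]x, b]) `|(g y)%:E|)%E.
  by have := H1_deriv_abs_sub_le fg axb; rewrite fb0 sub0r normrN.
have g_le : (\int[mu]_(y in `]x, b]) (g y ^+ 2 * expR (psi y))%:E <= I%:E)%E.
  apply: le_trans JI; apply: ge0_subset_integral => //; last exact: subset_trans sub_oc sub_xb.
  - apply/measurable_EFinP; apply: measurable_funM; first exact: measurable_funX.
    by apply: measurableT_comp.
  - by move=> y _; rewrite lee_fin mulr_ge0 ?sqr_ge0 ?expR_ge0.
have w_le : (\int[mu]_(y in `]x, b]) (expR (- psi y))%:E <= (expR (- psi x) / k)%:E)%E.
  apply: (le_trans _ (integral_expRN_le_of_growth k_gt0 x_lt_b mpsi_xb _)).
    apply: ge0_subset_integral => //.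
    by apply/measurable_EFinP; apply: measurableT_comp => //; exact: measurable_funN.
  by move=> y; exact: psi_growth x y ax.
have := cauchy_schwarz_expR_weight (mu := mu) (measurable_itv _) mg_oc mpsi_oc
  (normr_ge0 (f x)) (divr_gt0 (expR_gt0 _) k_gt0) f_le g_le w_le.
rewrite real_normK ?num_real // => csq.
have -> : I / k = I * (expR (- psi x) / k) * expR (psi x).
  by rewrite expRN; field; rewrite !gt_eqF ?expR_gt0.
by rewrite ler_pM2r ?expR_gt0.
Qed.

Lemma carleman_linear_weight :
  (k%:E * \int[mu]_(x in `[a, b]) (f x ^+ 2 * expR (psi x))%:E <= (b - a)%:E * J)%E.
Proof.
have /predU1P[J_oo|J_fin] : (J == +oo)%E || (J < +oo)%E by rewrite -le_eqVlt leey.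
  by rewrite J_oo gt0_muley ?leey // lte_fin subr_gt0.
have [I JI] : exists I, J = I%:E by exists (fine J); rewrite fineK // ge0_fin_numE.
apply: (@le_trans _ _ (k%:E * \int[mu]_(x in `[a, b]) (I / k)%:E))%E.
  apply: lee_wpmul2l; first by rewrite lee_fin ltW.
  apply: ge0_le_integral_nonmeasurable => x; rewrite /= in_itv /= => axb.
    by rewrite lee_fin mulr_ge0 ?sqr_ge0 ?expR_ge0.
  by rewrite lee_fin carleman_pointwise // JI.
have mu_ab : mu `[a, b] = (b - a)%:E by rewrite lebesgue_measure_itv /= lte_fin ab -EFinB.
rewrite integral_cst //= mu_ab -!EFinM JI lee_fin.
by rewrite mulrCA mulrA divfK ?gt_eqF // mulrC.
Qed.

End carleman_linear_weight.
End linear_growth.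

Theorem lemma4p12 (R : realType) (theta delta : R) :
  0 < theta < 1 -> 0 < delta -> theta + delta < 1 ->
  exists lambda0 : R, 0 < lambda0 /\
  forall lambda : R, lambda0 <= lambda ->
  exists s0 C : R, 0 < s0 /\ 0 < C /\
  forall s : R, s0 <= s ->
  forall f g : R -> R,
    H1_deriv (theta + delta) 1 f g -> f 1 = 0 ->
    (s%:E * \int[@lebesgue_measure R]_(x in `[(theta + delta)%R, 1%R])
        ((f x) ^+ 2 * expR (2 * s * phi0 lambda theta x))%R%:E
     <= C%:E * \int[@lebesgue_measure R]_(x in `[(theta + delta)%R, 1%R])
        ((g x) ^+ 2 * expR (2 * s * phi0 lambda theta x))%R%:E)%E.
Proof.
move=> _ delta_gt0 a_lt1; exists 1; split => // lambda lambda_ge1.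
have lambda_gt0 : 0 < lambda by exact: lt_le_trans ltr01 lambda_ge1.
set c := 4 * lambda * delta.
have c_gt0 : 0 < c by rewrite !mulr_gt0.
exists 1, ((1 - (theta + delta)) / c); split => //; split.
  by rewrite divr_gt0 // subr_gt0.
move=> s s_ge1 f g fg f1.
have s_gt0 : 0 < s by exact: lt_le_trans ltr01 s_ge1.
have growth x y : theta + delta <= x -> x <= y <= 1 ->
    2 * s * phi0 lambda theta x + s * c * (y - x) <= 2 * s * phi0 lambda theta y.
  move=> ax /andP[xy _]; rewrite -lerBrDl -mulrBr.
  have -> : s * c * (y - x) = 2 * s * (2 * lambda * delta * (y - x)) by rewrite /c; ring.
  by rewrite ler_pM2l ?mulr_gt0 // phi0_increment // ltW.
have mpsi : measurable_fun `[theta + delta, 1] (fun x => 2 * s * phi0 lambda theta x).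
  by apply: measurable_funM => //; exact: measurable_funTS (measurable_phi0 _ _).
have sE : s%:E = (c^-1%:E * (s * c)%:E)%E.
  by rewrite -EFinM mulrCA mulVf ?gt_eqF // mulr1.
have CE : ((1 - (theta + delta)) / c)%:E = (c^-1%:E * (1 - (theta + delta))%:E)%E.
  by rewrite -EFinM mulrC.
rewrite sE CE -!muleA; apply: lee_wpmul2l; first by rewrite lee_fin invr_ge0 ltW.
exact: carleman_linear_weight a_lt1 (mulr_gt0 s_gt0 c_gt0) mpsi growth fg f1.
Qed.
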